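(* Let $G$ be a connected graph with no true twins and with $\mathrm{diam}(G)=2$. Then $\mathrm{gp}(G)=\omega(G_{\rm SR})$ if and only if $\mathrm{gp}(G)=\alpha(G)$.
   Context: All graphs are finite and simple. For a connected graph $G$, $d_G(u,v)$ is the distance between $u$ and $v$, and a geodesic is a shortest path. A set $S\subseteq V(G)$ is a general position set if no three pairwise distinct vertices of $S$ lie on a common geodesic of $G$; $\mathrm{gp}(G)$ is the maximum cardinality of a general position set. A vertex $u$ is maximally distant from a vertex $v$ if every neighbor $w$ of $u$ satisfies $d_G(v,w)\le d_G(u,v)$; $u$ and $v$ are mutually maximally distant (MMD) if $u$ is maximally distant from $v$ and $v$ is maximally distant from $u$. The strong resolving graph $G_{\rm SR}$ has vertex set $V(G)$, two distinct vertices being adjacent in $G_{\rm SR}$ iff they are MMD in $G$. $\omega$ denotes the clique number and $\alpha$ the independence number. Vertices $u,v$ are true twins if $N[u]=N[v]$ (closed neighborhoods). *)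

(* A finite simple graph is a symmetric irreflexive relation
   e on a finType T. *)
From mathcomp Require Import all_boot.
Set Implicit Arguments. Unset Strict Implicit. Unset Printing Implicit Defensive.

Section Graph.
Variables (T : finType) (e : rel T).

Fixpoint within (n : nat) (u : T) : {set T} :=
  match n with
  | 0 => [set u]
  | n'.+1 => within n' u :|: [set y | [exists x in within n' u, e x y]]
  end.

(* d_G(u,v): least n with v within n steps of u (for connected graphs every
   distance is < #|T|). *)
Definition dist (u v : T) : nat := find (fun n => v \in within n u) (iota 0 #|T|).

Definition diam : nat := \max_(u : T) \max_(v : T) dist u v.

(* a geodesic from x to y: a walk x :: p (consecutive vertices adjacent)
   ending in y with exactly d(x,y) edges *)
Definition geodesic (x y : T) (p : seq T) : bool :=
  [&& path e x p, last x p == y & size p == dist x y].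

Definition on_common_geodesic (u v w : T) : bool :=
  [exists x : T, exists y : T, exists p : (dist x y).-tuple T,
     geodesic x y p && [&& u \in x :: p, v \in x :: p & w \in x :: p]].

Definition gp_set (S : {set T}) : bool :=
  [forall u in S, forall v in S, forall w in S,
     [&& u != v, v != w & u != w] ==> ~~ on_common_geodesic u v w].

Definition gp : nat := \max_(S : {set T} | gp_set S) #|S|.

Definition max_dist (u v : T) : bool :=
  [forall w, e u w ==> (dist v w <= dist u v)].

Definition mmd (u v : T) : bool := max_dist u v && max_dist v u.

Definition sr_adj (u v : T) : bool := (u != v) && mmd u v.

Definition clique (r : rel T) (S : {set T}) : bool :=
  [forall u in S, forall v in S, (u != v) ==> r u v].

Definition stable (r : rel T) (S : {set T}) : bool :=
  [forall u in S, forall v in S, ~~ r u v].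

Definition omega_SR : nat := \max_(S : {set T} | clique sr_adj S) #|S|.
Definition alpha : nat := \max_(S : {set T} | stable e S) #|S|.

Definition closed_nbhd (u : T) : {set T} := [set w | (w == u) || e u w].

Definition no_true_twins : Prop :=
  forall u v : T, u != v -> closed_nbhd u != closed_nbhd v.

Definition connected : Prop := forall u v : T, connect e u v.

End Graph.

(* In a graph of diameter at most 2, two distinct non-adjacent
   vertices are at distance 2 = diam, hence mutually maximally distant;
   two adjacent vertices u, v are mutually maximally distant only if every
   neighbour of either one is within distance 1 of the other, i.e. only if
   N[u] = N[v].  So without true twins G_SR is the complement of G, its
   cliques are the independent sets of G, and omega(G_SR) = alpha(G). *)
From mathcomp Require Import all_boot.
Set Implicit Arguments. Unset Strict Implicit. Unset Printing Implicit Defensive.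

Section Distance.
Variables (T : finType) (e : rel T).

Lemma within1 u v : (v \in within e 1 u) = (v == u) || e u v.
Proof.
rewrite /= !inE; congr (_ || _); apply/existsP/idP.
  by case=> x /andP[]; rewrite inE => /eqP ->.
by move=> euv; exists u; rewrite inE eqxx.
Qed.

Lemma dist_le u v n : n < #|T| -> v \in within e n u -> dist e u v <= n.
Proof.
move=> n_lt v_in; rewrite /dist leqNgt; apply/negP => lt_n.
by have := before_find 0 lt_n; rewrite nth_iota // add0n v_in.
Qed.

Lemma dist_in u v : dist e u v < #|T| -> v \in within e (dist e u v) u.
Proof.
move=> lt_card; have found : has (fun n => v \in within e n u) (iota 0 #|T|).
  by rewrite has_find size_iota.
by have := nth_find 0 found; rewrite nth_iota.
Qed.

Lemma card_gt1 (u v : T) : u != v -> 1 < #|T|.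
Proof. by move=> neq_uv; rewrite (cardD1 u) (cardD1 v) !inE eq_sym neq_uv. Qed.

Lemma dist_eq0 u v : (dist e u v == 0) = (u == v).
Proof.
apply/eqP/eqP => [d0|<-]; last by rewrite /dist (cardD1 u) inE /= inE eqxx.
have := @dist_in u v; rewrite d0 /= inE => /(_ _)/eqP -> //.
by rewrite (cardD1 u) inE.
Qed.

Lemma dist_le1 u v : (dist e u v <= 1) = (u == v) || e u v.
Proof.
have [<-|neq_uv] /= := eqVneq u v.
  by have /eqP -> : dist e u u == 0 by rewrite dist_eq0.
have card_T := card_gt1 neq_uv.
apply/idP/idP => [d_le1|euv]; last by rewrite dist_le // within1 euv orbT.
have := dist_in (leq_ltn_trans d_le1 card_T).
case: (dist e u v) d_le1 => [|[|//]] _.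
  by rewrite /= inE eq_sym (negbTE neq_uv).
by rewrite within1 eq_sym (negbTE neq_uv).
Qed.

Lemma dist_le_diam u v : dist e u v <= diam e.
Proof.
apply: leq_trans (leq_bigmax u).
exact: (leq_bigmax (F := fun w => dist e u w) v).
Qed.

End Distance.

Section StrongResolvingGraph.
Variables (T : finType) (e : rel T).
Hypothesis e_sym : symmetric e.

Lemma dist_adj u v : u != v -> e u v -> dist e u v = 1.
Proof.
move=> neq_uv euv; apply/eqP; rewrite eqn_leq dist_le1 euv orbT lt0n.
by rewrite dist_eq0.
Qed.

Lemma max_dist_adj_closed_nbhd u v :
  u != v -> e u v -> max_dist e u v -> closed_nbhd e u \subset closed_nbhd e v.
Proof.
move=> neq_uv euv /forallP far_u; apply/subsetP => w; rewrite !inE.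
case/orP => [/eqP ->|euw]; first by rewrite e_sym euv orbT.
by have := implyP (far_u w) euw; rewrite (dist_adj neq_uv euv) dist_le1 eq_sym.
Qed.

Lemma mmd_adj_closed_nbhd u v :
  u != v -> e u v -> mmd e u v -> closed_nbhd e u = closed_nbhd e v.
Proof.
move=> neq_uv euv /andP[far_u far_v]; apply/eqP; rewrite eqEsubset.
rewrite max_dist_adj_closed_nbhd //= max_dist_adj_closed_nbhd //.
  by rewrite eq_sym.
by rewrite e_sym.
Qed.

Lemma nonadj_mmd u v :
  diam e <= 2 -> u != v -> ~~ e u v -> mmd e u v.
Proof.
move=> diam_le2 neq_uv neuv.
have dist_le2 a b : dist e a b <= 2 by apply: leq_trans (dist_le_diam e a b) _.
have far a b : a != b -> ~~ e a b -> max_dist e a b.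
  move=> neq_ab neab; apply/forallP => w; apply/implyP => _.
  by apply: leq_trans (dist_le2 b w) _; rewrite ltnNge dist_le1 negb_or neq_ab.
by rewrite /mmd !far // 1?eq_sym // e_sym.
Qed.

Lemma mmdE u v : no_true_twins e -> diam e <= 2 ->
  u != v -> mmd e u v = ~~ e u v.
Proof.
move=> no_twins diam_le2 neq_uv; apply/idP/idP; last exact: nonadj_mmd.
apply: contraL => euv; apply: contra (no_twins u v neq_uv) => mmd_uv.
by rewrite (mmd_adj_closed_nbhd neq_uv).
Qed.

End StrongResolvingGraph.

Lemma clique_complement_stable (T : finType) (e r : rel T) (S : {set T}) :
  irreflexive e -> (forall u v, u != v -> r u v = ~~ e u v) ->
  clique r S = stable e S.
Proof.
move=> e_irr rE; apply/forall_inP/forall_inP => S_clique u uS;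
  apply/forall_inP => v vS; have := forall_inP (S_clique u uS) v vS.
  by have [<-|neq_uv] := eqVneq u v; rewrite ?e_irr // -rE.
by have [//|neq_uv] /= := eqVneq u v; rewrite rE.
Qed.

Lemma omega_SR_eq_alpha (T : finType) (e : rel T) :
  symmetric e -> irreflexive e -> no_true_twins e -> diam e <= 2 ->
  omega_SR e = alpha e.
Proof.
move=> e_sym e_irr no_twins diam_le2; apply: eq_bigl => S.
apply: clique_complement_stable => // u v neq_uv.
by rewrite /sr_adj neq_uv mmdE.
Qed.

Theorem proposition2p4 (T : finType) (e : rel T)
  (e_sym : symmetric e) (e_irr : irreflexive e)
  (Gconn : connected e) (Gtw : no_true_twins e) (Gdiam : diam e = 2) :
  gp e = omega_SR e <-> gp e = alpha e.
Proof. by rewrite omega_SR_eq_alpha // Gdiam. Qed.
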